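(* Let $L$ be a torsion-free abelian group of rank 1, $L^\vee=\operatorname{Hom}(L,\mathbf{Q}/\mathbf{Z})$ and $\operatorname{Tor}(L^\vee)$ its torsion subgroup. Let $S$ be the set of primes $p$ for which $L$ is $p$-divisible, and $\mu_{(S)}=\bigoplus_{p\notin S}\mathbf{Q}_p/\mathbf{Z}_p\subset\mathbf{Q}/\mathbf{Z}$ (the roots of unity of order prime to every $p\in S$). For $\xi\in\operatorname{Hom}(L,\widehat{\mathbf{Z}})$ define $\xi^\vee:\mathbf{Q}/\mathbf{Z}\to L^\vee$ by $\xi^\vee(r)(x)=r\cdot\xi(x)\in\mathbf{Q}/\mathbf{Z}$ (using the natural $\widehat{\mathbf{Z}}$-module structure of $\mathbf{Q}/\mathbf{Z}$; this is the Pontryagin dual of $\xi$). Then the following are equivalent: (1) $\xi$ generates the $\widehat{\mathbf{Z}}$-module $\operatorname{Hom}(L,\widehat{\mathbf{Z}})$; (2) the restriction of $\xi^\vee$ to $\mu_{(S)}$ is an isomorphism $\mu_{(S)}\xrightarrow{\sim}\operatorname{Tor}(L^\vee)$. *)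

From HB Require Import structures.
From mathcomp Require Import all_boot all_order all_algebra.
Set Implicit Arguments. Unset Strict Implicit. Unset Printing Implicit Defensive.
Import Order.TTheory GRing.Theory Num.Theory.
Local Open Scope ring_scope.

Definition torsion_free (L : zmodType) : Prop :=
  forall (x : L) (n : nat), (0 < n)%N -> x *+ n = 0 -> x = 0.

Definition rank_one (L : zmodType) : Prop :=
  (exists x : L, x != 0) /\
  forall x y : L, exists m n : int, (m != 0) || (n != 0) /\ x *~ m = y *~ n.

Definition p_divisible (L : zmodType) (p : nat) : Prop :=
  forall x : L, exists y : L, y *+ p = x.

(* ---------- Q/Z, represented by rationals modulo Z ---------- *)

Definition isint (r : rat) : bool := denq r == 1.

(* r (mod Z) lies in mu_(S): its order (= denominator of r) is prime to every
   prime p in S = { p | L is p-divisible } *)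
Definition in_muS (L : zmodType) (r : rat) : Prop :=
  forall p : nat, prime p -> p_divisible L p -> ~~ (p %| `|denq r|)%N.

(* ---------- Zhat = lim Z/nZ, as compatible families (c n mod n)_{n>0} ---------- *)

Definition is_zhat (c : nat -> int) : Prop :=
  forall m n : nat, (0 < m)%N -> (0 < n)%N -> (m %| n)%N ->
    (c n == c m %[mod m])%Z.

Definition zhat_eq (c d : nat -> int) : Prop :=
  forall n : nat, (0 < n)%N -> (c n == d n %[mod n])%Z.

Definition zhat_add (c d : nat -> int) : nat -> int := fun n => c n + d n.
Definition zhat_mul (c d : nat -> int) : nat -> int := fun n => c n * d n.

Definition is_hom_zhat (L : zmodType) (xi : L -> nat -> int) : Prop :=
  (forall x, is_zhat (xi x)) /\
  (forall x y, zhat_eq (xi (x + y)) (zhat_add (xi x) (xi y))).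

Definition generates_hom (L : zmodType) (xi : L -> nat -> int) : Prop :=
  forall eta : L -> nat -> int, is_hom_zhat eta ->
    exists c, is_zhat c /\ forall x, zhat_eq (eta x) (zhat_mul c (xi x)).

(* natural Zhat-module structure on Q/Z : c . (a/n) = (c_n a)/n  (mod Z) *)
Definition qz_act (c : nat -> int) (r : rat) : rat :=
  ((numq r * c `|denq r|%N)%:~R) / (denq r)%:~R.

(* ---------- L^vee = Hom(L, Q/Z), functions L -> Q taken mod Z ---------- *)

Definition is_dual (L : zmodType) (f : L -> rat) : Prop :=
  forall x y : L, isint (f (x + y) - f x - f y).

Definition dual_eq (L : zmodType) (f g : L -> rat) : Prop :=
  forall x : L, isint (f x - g x).

Definition in_tor_dual (L : zmodType) (f : L -> rat) : Prop :=
  is_dual f /\ exists n : nat, (0 < n)%N /\ forall x : L, isint (f x *+ n).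

Definition xi_dual (L : zmodType) (xi : L -> nat -> int) (r : rat) : L -> rat :=
  fun x => qz_act (xi x) r.

Definition dual_restr_iso (L : zmodType) (xi : L -> nat -> int) : Prop :=
  [/\
      (forall r, in_muS L r -> in_tor_dual (xi_dual xi r)),
      (forall r s, in_muS L r -> in_muS L s ->
         dual_eq (xi_dual xi (r + s)) (fun x => xi_dual xi r x + xi_dual xi s x)),
      (forall r s, in_muS L r -> in_muS L s ->
         dual_eq (xi_dual xi r) (xi_dual xi s) -> isint (r - s)) &
      (forall f, in_tor_dual f -> exists r, in_muS L r /\ dual_eq f (xi_dual xi r))].

From mathcomp Require Import all_boot all_order all_algebra ring.
From Stdlib Require Import ClassicalEpsilon.
Set Implicit Arguments. Unset Strict Implicit. Unset Printing Implicit Defensive.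
Import Order.TTheory GRing.Theory Num.Theory.
Local Open Scope ring_scope.

(* Fix a prime p outside S and u in L not divisible by p.  Rank one gives a
   coordinate x |-> a = n/d in Z_(p), where d x = n u, and composing it with
   Z_(p) -> Z_p in Zhat yields a homomorphism sending u to 1 in Z_p.  Writing it
   as c xi shows that a generator xi has xi(u) a unit in Z_p.  This makes xi^vee
   injective on mu_(S), and surjective onto characters of order p^a, which are
   determined by their value at u; characters of arbitrary order split into
   parts of coprime prime-power orders, the primes of S dropping out because L
   is divisible by them.  Conversely, if xi^vee is an isomorphism, solving
   xi^vee(c_n / n) = eta^vee(1 / n) for every n gives a compatible family
   c in Zhat with eta = c xi. *)

Lemma isintE (r : rat) : isint r = (r \is a Num.int).
Proof. by []. Qed.

Lemma Qint_fracE (z d : int) : d != 0 ->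
  ((z%:~R / d%:~R : rat) \is a Num.int) = (d %| z)%Z.
Proof.
move=> d0; apply/idP/idP; last exact: Qint_dvdz.
move=> /intrP[k hk]; apply/dvdzP; exists k.
by apply: (@intr_inj rat); rewrite intrM -hk mulfVK ?intr_eq0.
Qed.

Lemma Qint_mulz_denqE (r : rat) (k : int) : (r * k%:~R \is a Num.int) = (denq r %| k)%Z.
Proof.
rewrite -{1}[r]divq_num_den mulrAC -intrM Qint_fracE ?denq_neq0 //.
by rewrite Gauss_dvdzr // coprimezE coprime_sym coprime_num_den.
Qed.

Lemma Qint_mulrn_denqE (r : rat) (n : nat) : (r *+ n \is a Num.int) = (denq r %| n%:Z)%Z.
Proof. by rewrite -Qint_mulz_denqE -mulr_natr. Qed.

Lemma denqD_dvd (r s : rat) : (denq (r + s) %| denq r * denq s)%Z.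
Proof.
rewrite -Qint_mulz_denqE intrM mulrDl mulrA -numqE mulrCA -numqE.
by rewrite rpredD // rpredM // intr_int.
Qed.

Lemma prime_ndvd_denqD (p : nat) (r s : rat) : prime p ->
  ~~ (p %| `|denq r|)%N -> ~~ (p %| `|denq s|)%N -> ~~ (p %| `|denq (r + s)|)%N.
Proof.
move=> pp pr ps; apply/negP => /dvdn_trans/(_ (denqD_dvd r s)).
by rewrite abszM Euclid_dvdM // (negPf pr) (negPf ps).
Qed.

Lemma denqMz_dvd (r : rat) (z : int) : (denq (r * z%:~R) %| denq r)%Z.
Proof. by rewrite -Qint_mulz_denqE mulrAC -numqE -intrM intr_int. Qed.

Lemma denq_frac_dvd (z d : int) : (denq (z%:~R / d%:~R) %| d)%Z.
Proof.
have [->|d0] := eqVneq d 0; first by rewrite dvdz0.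
by rewrite -Qint_mulz_denqE mulfVK ?intr_eq0 // intr_int.
Qed.

Lemma is_zhat_dvdE (c : nat -> int) (m n : nat) : is_zhat c ->
  (0 < m)%N -> (0 < n)%N -> (m %| n)%N -> (m%:Z %| c n)%Z = (m%:Z %| c m)%Z.
Proof.
by move=> hc m0 n0 mn; rewrite !(sameP dvdz_mod0P eqP) (eqP (hc m n m0 n0 mn)).
Qed.

Lemma qz_actE (c : nat -> int) (r : rat) : qz_act c r = r * (c `|denq r|%N)%:~R.
Proof. by rewrite /qz_act intrM mulrAC divq_num_den. Qed.

Lemma qz_act_mul (c : nat -> int) (r : rat) (k : nat) : is_zhat c -> (0 < k)%N ->
  (denq r %| k%:Z)%Z -> qz_act c r - r * (c k)%:~R \is a Num.int.
Proof.
move=> hc k0 dk; rewrite qz_actE -mulrBr -intrB Qint_mulz_denqE.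
have d0 : (0 < `|denq r|)%N by rewrite absz_gt0 denq_neq0.
by rewrite -absz_denq -eqz_mod_dvd eq_sym; apply: hc; rewrite // -dvdzE absz_denq.
Qed.

Lemma qz_actD (c : nat -> int) (r s : rat) : is_zhat c ->
  qz_act c (r + s) - (qz_act c r + qz_act c s) \is a Num.int.
Proof.
move=> hc; set k := absz (denq r * denq s).
have k0 : (0 < k)%N by rewrite absz_gt0 mulf_neq0 ?denq_neq0.
have dvd_k t : (denq t %| denq r * denq s)%Z -> (denq t %| k%:Z)%Z by [].
have := rpredB (qz_act_mul hc k0 (dvd_k _ (denqD_dvd r s)))
  (rpredD (qz_act_mul hc k0 (dvd_k _ (dvdz_mulr _ (dvdzz _))))
          (qz_act_mul hc k0 (dvd_k _ (dvdz_mull _ (dvdzz _))))).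
by congr in_mem; ring.
Qed.

Lemma qz_actMz (c : nat -> int) (r : rat) (z : int) : is_zhat c ->
  qz_act c (r * z%:~R) - qz_act c r * z%:~R \is a Num.int.
Proof.
move=> hc; set k := `|denq r|%N.
have k0 : (0 < k)%N by rewrite absz_gt0 denq_neq0.
have dk : (denq r %| k%:Z)%Z by rewrite absz_denq.
have := rpredB (qz_act_mul hc k0 (dvdz_trans (denqMz_dvd r z) dk))
  (rpredMz z (qz_act_mul hc k0 dk)).
congr in_mem; clearbody k; rewrite -mulrzr; ring.
Qed.

Section QuasiMorphism.
Variables (L V : zmodType) (S : zmodClosed V) (g : L -> V).
Hypothesis gD : forall x y, g (x + y) - g x - g y \in S.

Lemma quasi_morph0 : g 0 \in S.
Proof. by have := gD 0 0; rewrite addr0 subrr sub0r rpredN. Qed.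

Lemma quasi_morphMn x n : g (x *+ n) - g x *+ n \in S.
Proof.
elim: n => [|n IHn]; first by rewrite !mulr0n subr0 quasi_morph0.
have := rpredD (gD x (x *+ n)) IHn.
by rewrite addrA subrK -addrA -opprD -!mulrS.
Qed.

Lemma quasi_morphN x : g (- x) + g x \in S.
Proof.
have := rpredB quasi_morph0 (gD x (- x)).
by rewrite subrr -addrA -opprD subKr addrC.
Qed.

Lemma quasi_morphMz x z : g (x *~ z) - g x *~ z \in S.
Proof.
case: z => n; first exact: quasi_morphMn.
have := rpredB (quasi_morphN (x *+ n.+1)) (quasi_morphMn x n.+1).
by rewrite addrKA NegzE !mulrNz -!pmulrn.
Qed.

End QuasiMorphism.

Lemma dualMz (L : zmodType) (f : L -> rat) : is_dual f ->
  forall x z, f (x *~ z) - f x * z%:~R \is a Num.int.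
Proof.
move=> hf x z; have fD a b : f (a + b) - f a - f b \is a Num.int := hf a b.
by have := quasi_morphMz fD x z; rewrite mulrzr.
Qed.

Lemma in_muS_dvd (L : zmodType) (r : rat) (m : int) : (denq r %| m)%Z ->
  (forall p, prime p -> p_divisible L p -> ~~ (p %| `|m|)%N) -> in_muS L r.
Proof. by move=> rm hm p pp pL; apply: contra (hm p pp pL) => /dvdn_trans; apply. Qed.

Lemma in_muSD (L : zmodType) (r s : rat) :
  in_muS L r -> in_muS L s -> in_muS L (r + s).
Proof. by move=> hr hs p pp pL; rewrite prime_ndvd_denqD ?hr ?hs. Qed.

Lemma in_muSN (L : zmodType) (r : rat) : in_muS L r -> in_muS L (- r).
Proof. by move=> hr p pp pL; rewrite denqN hr. Qed.

Lemma in_muSMz (L : zmodType) (r : rat) (z : int) : in_muS L r -> in_muS L (r * z%:~R).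
Proof. exact: in_muS_dvd (denqMz_dvd r z). Qed.

Lemma in_muS_int (L : zmodType) (z : int) : in_muS L z%:~R.
Proof. by move=> p pp _; rewrite denq_int dvdn1 neq_ltn prime_gt1 ?orbT. Qed.

Lemma in_muS_frac (L : zmodType) (z d : int) :
  (forall p, prime p -> p_divisible L p -> ~~ (p %| `|d|)%N) ->
  in_muS L (z%:~R / d%:~R).
Proof. exact: in_muS_dvd (denq_frac_dvd z d). Qed.

Lemma eqq_frac (a : rat) (n m : int) : m != 0 ->
  (a == n%:~R / m%:~R) = (numq a * m == n * denq a).
Proof.
move=> m0; rewrite -[a in LHS]divq_num_den eqr_div ?intr_eq0 ?denq_neq0 //.
by rewrite -!intrM eqr_int.
Qed.

Lemma torsion_freeMz (L : zmodType) : torsion_free L ->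
  forall (x : L) (z : int), z != 0 -> x *~ z = 0 -> x = 0.
Proof.
move=> hTF x z z0 xz0; apply: (hTF x `|z|%N); first by rewrite absz_gt0.
case: z z0 xz0 => n _ xz0; first by rewrite pmulrn.
by move/eqP: xz0; rewrite NegzE mulrNz oppr_eq0 -pmulrn => /eqP.
Qed.

Section Coordinate.
Variables (L : zmodType) (hTF : torsion_free L) (hR1 : rank_one L).
Variables (u : L) (u0 : u != 0).

Lemma mulIz : injective (fun z : int => u *~ z).
Proof.
move=> a b /eqP; rewrite -subr_eq0 -mulrzBr => /eqP uab0; apply/eqP.
rewrite -subr_eq0; have [//|ab0] := eqVneq (a - b) 0.
by move: u0; rewrite (torsion_freeMz hTF ab0 uab0) eqxx.
Qed.

Lemma coord_ex x : exists a : rat, x *~ denq a == u *~ numq a.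
Proof.
have [m [n [mn0 xmun]]] := hR1.2 x u.
have m0 : m != 0.
  apply: contraTneq mn0 => m0; rewrite m0 eqxx /= negbK.
  by apply/eqP/mulIz => /=; rewrite -xmun m0 !mulr0z.
exists (n%:~R / m%:~R); apply/eqP.
have := eqxx (n%:~R / m%:~R : rat); rewrite {1}eqq_frac // => /eqP cross.
apply/eqP; rewrite -subr_eq0; apply/eqP; apply: (torsion_freeMz hTF m0).
by rewrite mulrzBl -!mulrzA cross [denq _ * m]mulrC !mulrzA xmun subrr.
Qed.

Definition coord (x : L) : rat := xchoose (coord_ex x).

Lemma coordP x : x *~ denq (coord x) = u *~ numq (coord x).
Proof. exact/eqP/(xchooseP (coord_ex x)). Qed.

Lemma coord_frac x (m n : int) : m != 0 -> x *~ m = u *~ n -> coord x = n%:~R / m%:~R.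
Proof.
move=> m0 xmun; apply/eqP; rewrite eqq_frac //; apply/eqP/mulIz => /=.
by rewrite mulrzA -coordP mulrzAC xmun -mulrzA.
Qed.

Lemma coordD : {morph coord : x y / x + y}.
Proof.
move=> x y; have := coordP x; have := coordP y.
set a := coord x; set b := coord y => yb xa.
rewrite (@coord_frac _ (denq a * denq b) (numq a * denq b + numq b * denq a)).
- rewrite -[a in RHS]divq_num_den -[b in RHS]divq_num_den intrD !intrM.
  by field; rewrite !intr_eq0 !denq_neq0.
- by rewrite mulf_neq0 ?denq_neq0.
by rewrite mulrzDl mulrzDr {2}[denq a * _]mulrC !mulrzA xa yb -!mulrzA.
Qed.

Lemma coord_u : coord u = 1.
Proof. by rewrite (@coord_frac u 1 1) // divr1. Qed.

Lemma coord_den_ndvd p : prime p -> (forall y, y *+ p != u) ->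
  forall x, ~~ (p %| `|denq (coord x)|)%N.
Proof.
move=> pp hu x; apply/negP => /dvdnP[k dk].
have /coprimezP[[al be] /= bezout] : coprimez (denq (coord x)) (numq (coord x)).
  by rewrite coprimezE coprime_sym coprime_num_den.
apply/negP: (hu ((u *~ al + x *~ be) *~ k)); apply/negPn/eqP.
rewrite pmulrn -mulrzA -PoszM -dk absz_denq mulrzDl -!mulrzA [be * _]mulrC mulrzA.
by rewrite mulrzA coordP -!mulrzA -mulrzDr [numq _ * be]mulrC bezout.
Qed.

End Coordinate.

Section PadicEmbedding.
Variables (p : nat) (pp : prime p).

Lemma coprimez_ppart (m : int) (k : nat) : ~~ (p %| `|m|)%N -> coprimez m (k`_p)%N.
Proof.
by move=> pm; rewrite coprimezE /= p_part coprime_sym coprimeXl // prime_coprime.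
Qed.

Lemma dvdz_ppart_p'part (k : nat) (a : int) : (0 < k)%N ->
  ((k`_p)%N %| a)%Z -> ((k`_p^')%N %| a)%Z -> (k%:Z %| a)%Z.
Proof.
move=> k0 ha hb; rewrite -(partnC p k0) PoszM Gauss_dvdz ?ha //.
by rewrite coprimezE /= coprime_partC.
Qed.

(* [padic_inv m] is the element of Zhat = Z_p x prod_(l != p) Z_l equal to
   [m^-1] in Z_p and to [0] in the other factors. *)
Definition padic_inv (m : int) (k : nat) : int :=
  (k`_p^')%N%:Z * (egcdz (m * (k`_p^')%N%:Z) (k`_p)%N%:Z).1.

Lemma padic_inv_p'part (m : int) (k : nat) : ((k`_p^')%N %| padic_inv m k)%Z.
Proof. exact: dvdz_mulr. Qed.

Lemma padic_inv_ppart (m : int) (k : nat) : ~~ (p %| `|m|)%N ->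
  ((k`_p)%N %| m * padic_inv m k - 1)%Z.
Proof.
move=> pm; rewrite /padic_inv mulrA [_ * (egcdz _ _).1]mulrC.
have : coprimez (m * (k`_p^')%N%:Z) (k`_p)%N.
  by rewrite coprimezMl coprimez_ppart //= coprimezE /= coprime_sym coprime_partC.
case: egcdzP => a b bezout _ /eqP cop; move: bezout; rewrite cop => bezout.
by rewrite -bezout /= opprD addrA subrr sub0r rpredN dvdz_mull.
Qed.

Lemma padic_inv_zhat (m : int) : ~~ (p %| `|m|)%N -> is_zhat (padic_inv m).
Proof.
move=> pm j k j0 k0 jk; rewrite eqz_mod_dvd; apply: dvdz_ppart_p'part => //.
  have jk_p : ((j`_p)%N%:Z %| (k`_p)%N%:Z)%Z by rewrite dvdzE /= partn_dvd.
  have cop : coprimez (j`_p)%N m by rewrite coprimez_sym coprimez_ppart.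
  rewrite -(Gauss_dvdzr _ cop).
  have -> : m * (padic_inv m k - padic_inv m j) =
            (m * padic_inv m k - 1) - (m * padic_inv m j - 1) by ring.
  rewrite rpredB ?padic_inv_ppart //.
  exact: dvdz_trans jk_p (padic_inv_ppart k pm).
rewrite rpredB ?padic_inv_p'part //.
by apply: dvdz_trans (padic_inv_p'part m k); rewrite dvdzE /= partn_dvd.
Qed.

Definition padic_embed (a : rat) (k : nat) : int := numq a * padic_inv (denq a) k.

Lemma padic_embed_zhat (a : rat) : ~~ (p %| `|denq a|)%N -> is_zhat (padic_embed a).
Proof.
move=> pa j k j0 k0 jk; rewrite eqz_mod_dvd -mulrBr dvdz_mull // -eqz_mod_dvd.
exact: padic_inv_zhat.
Qed.

Lemma padic_embed_ppart (a : rat) (k : nat) : ~~ (p %| `|denq a|)%N ->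
  ((k`_p)%N %| denq a * padic_embed a k - numq a)%Z.
Proof.
move=> pa; rewrite /padic_embed mulrCA -{2}[numq a]mulr1 -mulrBr.
by rewrite dvdz_mull // padic_inv_ppart.
Qed.

Lemma padic_embed_p'part (a : rat) (k : nat) : ((k`_p^')%N %| padic_embed a k)%Z.
Proof. by rewrite dvdz_mull // padic_inv_p'part. Qed.

Lemma padic_embedD (a b : rat) : ~~ (p %| `|denq a|)%N -> ~~ (p %| `|denq b|)%N ->
  zhat_eq (padic_embed (a + b)) (zhat_add (padic_embed a) (padic_embed b)).
Proof.
move=> pa pb k k0; rewrite eqz_mod_dvd /zhat_add.
apply: dvdz_ppart_p'part => //; last by rewrite !rpredB ?rpredD ?padic_embed_p'part.
have pab := prime_ndvd_denqD pp pa pb.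
have cross : numq (a + b) * (denq a * denq b) =
             (numq a * denq b + numq b * denq a) * denq (a + b).
  apply/eqP; rewrite -eqq_frac ?mulf_neq0 ?denq_neq0 //.
  rewrite -[a in a + _]divq_num_den -[b in _ + b]divq_num_den intrD !intrM.
  by apply/eqP; field; rewrite !intr_eq0 !denq_neq0.
have cop : coprimez (k`_p)%N (denq a * denq b * denq (a + b)).
  by rewrite coprimez_sym !coprimezMl !coprimez_ppart.
rewrite -(Gauss_dvdzr _ cop).
set ea := padic_embed a k; set eb := padic_embed b k; set ec := padic_embed _ k.
have -> : denq a * denq b * denq (a + b) * (ec - (ea + eb)) =
    denq a * denq b * (denq (a + b) * ec - numq (a + b))
  - denq b * denq (a + b) * (denq a * ea - numq a)
  - denq a * denq (a + b) * (denq b * eb - numq b)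
  + (numq (a + b) * (denq a * denq b)
     - (numq a * denq b + numq b * denq a) * denq (a + b)) by ring.
by rewrite cross subrr addr0 !rpredB ?dvdz_mull ?padic_embed_ppart.
Qed.

Lemma padic_embed1 : (p%:Z %| padic_embed 1 p - 1)%Z.
Proof.
have := @padic_embed_ppart 1 p; rewrite p_part logn_prime // eqxx expn1 /= mul1r.
by apply; rewrite dvdn1 neq_ltn prime_gt1 ?orbT.
Qed.

End PadicEmbedding.

Section DualMap.
Variables (L : zmodType) (xi : L -> nat -> int) (hxi : is_hom_zhat xi).

Lemma xi_dual_frac (z : int) (k : nat) (x : L) : (0 < k)%N ->
  xi_dual xi (z%:~R / k%:~R) x - (z * xi x k)%:~R / k%:~R \is a Num.int.
Proof.
move=> k0; have := qz_act_mul (hxi.1 x) k0 (denq_frac_dvd z k).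
by rewrite /xi_dual intrM mulrAC.
Qed.

Lemma xi_dual0 (x : L) : xi_dual xi 0 x = 0.
Proof. by rewrite /xi_dual qz_actE mul0r. Qed.

Lemma xi_dual_is_dual (r : rat) : is_dual (xi_dual xi r).
Proof.
move=> x y; rewrite isintE /xi_dual !qz_actE -!mulrBr -!intrB Qint_mulz_denqE.
have d0 : (0 < `|denq r|)%N by rewrite absz_gt0 denq_neq0.
have := hxi.2 x y _ d0; rewrite eqz_mod_dvd absz_denq /zhat_add.
by rewrite opprD addrA.
Qed.

Lemma xi_dual_mulrn (r : rat) (n : nat) (x : L) :
  (denq r %| n%:Z)%Z -> xi_dual xi r x *+ n \is a Num.int.
Proof.
by move=> rn; rewrite /xi_dual qz_actE Qint_mulrn_denqE (dvdz_trans (denqMz_dvd _ _)).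
Qed.

Lemma xi_dual_tor (r : rat) : in_tor_dual (xi_dual xi r).
Proof.
split; first exact: xi_dual_is_dual.
exists `|denq r|%N; split; first by rewrite absz_gt0 denq_neq0.
by move=> x; apply: xi_dual_mulrn; rewrite absz_denq.
Qed.

Lemma xi_dualD (r s : rat) :
  dual_eq (xi_dual xi (r + s)) (fun x => xi_dual xi r x + xi_dual xi s x).
Proof. by move=> x; apply: qz_actD (hxi.1 x). Qed.

Lemma xi_dualMz (r : rat) (z : int) (x : L) :
  xi_dual xi (r * z%:~R) x - xi_dual xi r x * z%:~R \is a Num.int.
Proof. exact: qz_actMz (hxi.1 x). Qed.

End DualMap.

Lemma is_dualB (L : zmodType) (f g : L -> rat) :
  is_dual f -> is_dual g -> is_dual (fun x => f x - g x).
Proof.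
move=> hf hg x y; move: (hf x y) (hg x y); rewrite !isintE => fxy gxy.
by have := rpredB fxy gxy; congr in_mem; ring.
Qed.

Lemma is_dualMz (L : zmodType) (f : L -> rat) (z : int) :
  is_dual f -> is_dual (fun x => f x * z%:~R).
Proof. by move=> hf x y; rewrite isintE -!mulrBl rpredM ?intr_int //; exact: hf x y. Qed.

Lemma dual_eq_frac (L : zmodType) (eta xi : L -> nat -> int) (a b : int) (n : nat) :
  is_hom_zhat eta -> is_hom_zhat xi -> (0 < n)%N ->
  dual_eq (xi_dual eta (a%:~R / n%:~R)) (xi_dual xi (b%:~R / n%:~R)) <->
  forall x, (n%:Z %| a * eta x n - b * xi x n)%Z.
Proof.
move=> heta hxi n0; have n0' : n%:Z != 0 by rewrite -lt0n.
suff eq_x x : isint (xi_dual eta (a%:~R / n%:~R) x - xi_dual xi (b%:~R / n%:~R) x) =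
              (n%:Z %| a * eta x n - b * xi x n)%Z.
  by split=> h x; [rewrite -eq_x | rewrite eq_x].
rewrite -Qint_fracE // intrB mulrBl isintE.
set A := xi_dual eta _ x; set B := xi_dual xi _ x.
have -> : A - B = (A - (a * eta x n)%:~R / n%:~R) - (B - (b * xi x n)%:~R / n%:~R)
                  + ((a * eta x n)%:~R / n%:~R - (b * xi x n)%:~R / n%:~R) by ring.
by rewrite rpredDl // rpredB // xi_dual_frac.
Qed.

Section IsoGenerates.
Variables (L : zmodType) (xi : L -> nat -> int) (hxi : is_hom_zhat xi).
Hypothesis iso : dual_restr_iso xi.

Lemma iso_lift_frac (eta : L -> nat -> int) (n : nat) : is_hom_zhat eta -> (0 < n)%N ->
  exists c : int, in_muS L (c%:~R / n%:~R) /\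
                  forall x, (n%:Z %| eta x n - c * xi x n)%Z.
Proof.
move=> heta n0; have [_ _ inj surj] := iso.
have n0' : (n%:~R : rat) != 0 by rewrite intr_eq0 -lt0n.
have [r [hr eta_r]] := surj _ (xi_dual_tor heta (1%:~R / n%:~R)).
have /intrP[c rc] : r * n%:~R \is a Num.int.
  rewrite -[r * _]subr0 -isintE; apply: inj (in_muSMz n hr) (@in_muS_int L 0) _ => x.
  have := eta_r x; rewrite xi_dual0 subr0 !isintE => eta_rx.
  have eta_n := rpredM (rpredB (xi_dual_frac heta 1 x n0) eta_rx) (@intr_int rat n).
  have := rpredD (rpredD (xi_dualMz hxi r n x) eta_n) (@intr_int rat (eta x n)).
  by congr in_mem; rewrite mul1r; field.
have rE : c%:~R / n%:~R = r by rewrite -rc mulfK.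
exists c; split; first by rewrite rE.
move=> x; rewrite -[eta x n]mul1r; move: x.
by apply/(dual_eq_frac 1 c heta hxi n0); rewrite rE.
Qed.

Lemma iso_generates : generates_hom xi.
Proof.
move=> eta heta.
have /choice[c hc] : forall n, exists c : int, (0 < n)%N ->
    in_muS L (c%:~R / n%:~R) /\ forall x, (n%:Z %| eta x n - c * xi x n)%Z.
  move=> n; have [->|n0] := posnP n; first by exists 0.
  by have [c hc] := iso_lift_frac heta n0; exists c.
exists c; split; last by move=> x n n0; rewrite eqz_mod_dvd; apply: (hc n n0).2.
move=> m n m0 n0 mn; have [_ _ inj _] := iso.
have cnm : in_muS L ((c n)%:~R / m%:~R).
  have [k nk] := dvdnP mn.
  have -> : (c n)%:~R / m%:~R = (c n)%:~R / n%:~R * k%:~R :> rat.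
    have k0 : (0 < k)%N by move: n0; rewrite nk muln_gt0 => /andP[].
    rewrite nk PoszM intrM; field.
    by rewrite !pnatr_eq0 -!lt0n k0 m0.
  exact: in_muSMz (hc n n0).1.
rewrite eqz_mod_dvd -(Qint_fracE _ (_ : m%:Z != 0)) ?intrB ?mulrBl; last by rewrite -lt0n.
apply: inj cnm (hc m m0).1 _; apply/(dual_eq_frac _ _ hxi hxi m0) => x.
have dvd_mod (h : L -> nat -> int) : is_hom_zhat h -> (m%:Z %| h x n - h x m)%Z.
  by move=> [hz _]; rewrite -eqz_mod_dvd hz.
have -> : c n * xi x m - c m * xi x m =
  - (eta x n - c n * xi x n) + (eta x n - eta x m) + (eta x m - c m * xi x m)
  - c n * (xi x n - xi x m) by ring.
apply: rpredB; last exact: dvdz_mull (dvd_mod _ hxi).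
apply: rpredD; last exact: (hc m m0).2.
apply: rpredD; last exact: dvd_mod _ heta.
by rewrite rpredN; apply: dvdz_trans ((hc n n0).2 x); rewrite dvdzE.
Qed.

End IsoGenerates.

Definition dual_image (L : zmodType) (xi : L -> nat -> int) (f : L -> rat) : Prop :=
  exists r, in_muS L r /\ dual_eq f (xi_dual xi r).

Lemma nondivisible_witness (L : zmodType) (p : nat) :
  ~ p_divisible L p -> exists u : L, forall y, y *+ p != u.
Proof.
move=> npL; apply: NNPP => no_u; apply: npL => x; apply: NNPP => no_y; apply: no_u.
by exists x => y; apply/eqP => yx; apply: no_y; exists y.
Qed.

Section NonDivisibleElement.
Variables (L : zmodType) (hTF : torsion_free L) (hR1 : rank_one L).
Variables (p : nat) (pp : prime p) (u : L) (hu : forall y : L, y *+ p != u).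

Let u0 : u != 0.
Proof. by apply: contra_neq (hu 0) => ->; rewrite mul0rn. Qed.

Let not_p_divisible : ~ p_divisible L p.
Proof. by move=> /(_ u)[y /eqP]; apply/negP. Qed.

Local Notation coord := (coord hTF hR1 u0).
Let coord_ndvd := coord_den_ndvd hTF hR1 u0 pp hu.

Lemma padic_coord_hom : is_hom_zhat (fun x => padic_embed p (coord x)).
Proof.
split=> [x | x y] /=; first exact (padic_embed_zhat pp (coord_ndvd x)).
by rewrite (coordD hTF hR1 u0); apply: padic_embedD.
Qed.

Lemma generates_hom_ndvd (xi : L -> nat -> int) :
  generates_hom xi -> ~~ (p%:Z %| xi u p)%Z.
Proof.
move=> gen; have [c [_ eta_c]] := gen _ padic_coord_hom.
have := eta_c u p (prime_gt0 pp).
rewrite /= (coord_u hTF hR1 u0) eqz_mod_dvd /zhat_mul => p_eta; apply/negP => p_xi.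
have := rpredB (rpredD p_eta (dvdz_mull (c p) p_xi)) (padic_embed1 pp).
by rewrite subrK subKr dvdzE /= dvdn1 => /eqP p1; move: (prime_gt1 pp); rewrite p1.
Qed.

Lemma dual_ppow_vanish (h : L -> rat) (a : nat) : is_dual h ->
  (forall x, h x *+ p ^ a \is a Num.int) -> h u \is a Num.int ->
  forall x, h x \is a Num.int.
Proof.
move=> hD ha hu_int x; set d := denq (coord x); set n := numq (coord x).
have hxd : h x * d%:~R \is a Num.int.
  have := rpredD (rpredB (dualMz hD u n) (dualMz hD x d)) (rpredMz n hu_int).
  by rewrite -(coordP hTF hR1 u0); congr in_mem; rewrite -mulrzr; ring.
have /coprimezP[[al be] /= bezout] : coprimez (p ^ a)%N d.
  by rewrite coprimezE /= coprimeXl // prime_coprime // coord_ndvd.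
have -> : h x = (h x *+ p ^ a) * al%:~R + (h x * d%:~R) * be%:~R.
  rewrite -mulr_natr -!mulrA -mulrDr -[(p ^ a)%:R]/(((p ^ a)%N%:Z)%:~R) -!intrM -intrD.
  by rewrite [_ * al]mulrC [d * _]mulrC bezout mulr1.
by rewrite rpredD // rpredM // intr_int.
Qed.

Lemma generates_coprime_ppow (xi : L -> nat -> int) (a : nat) :
  is_hom_zhat xi -> generates_hom xi -> coprimez (xi u (p ^ a)%N) (p ^ a)%N.
Proof.
move=> hxi gen; case: a => [|a]; first by rewrite expn0 coprimezE /= coprimen1.
rewrite coprimezE /= coprime_pexpr // coprime_sym prime_coprime //.
apply: contra (generates_hom_ndvd gen) => p_xi.
have q0 : (0 < p ^ a.+1)%N by rewrite expn_gt0 prime_gt0.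
by rewrite -(is_zhat_dvdE (hxi.1 u) (prime_gt0 pp) q0 (dvdn_exp (ltn0Sn a) (dvdnn p))).
Qed.

Lemma generates_dual_image_ppow (xi : L -> nat -> int) (f : L -> rat) (a : nat) :
  is_hom_zhat xi -> generates_hom xi -> is_dual f ->
  (forall x, f x *+ p ^ a \is a Num.int) -> dual_image xi f.
Proof.
move=> hxi gen hf fa; have q0 : (0 < p ^ a)%N by rewrite expn_gt0 prime_gt0.
have q0' : ((p ^ a)%N%:~R : rat) != 0 by rewrite intr_eq0 -lt0n.
have /coprimezP[[s t] /= bezout] := generates_coprime_ppow a hxi gen.
have /intrP[b fub] := fa u; rewrite -mulr_natr in fub.
set r : rat := (b * s)%:~R / (p ^ a)%N%:~R.
exists r; split.
  apply: in_muS_frac => p' pp' p'L; apply/negP.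
  rewrite /= Euclid_dvdX // dvdn_prime2 // => /andP[/eqP p'p _].
  by apply: not_p_divisible; rewrite -p'p.
move=> x; rewrite isintE.
apply: (dual_ppow_vanish (is_dualB hf (xi_dual_is_dual hxi r))) => [y|].
  by rewrite mulrnBl rpredB // xi_dual_mulrn // denq_frac_dvd.
have -> : f u - xi_dual xi r u = (b * t)%:~R
    - (xi_dual xi r u - (b * s * xi u (p ^ a)%N)%:~R / (p ^ a)%N%:~R).
  rewrite -[f u](mulfK q0') fub.
  have -> : (b%:~R : rat) =
            b%:~R * (s%:~R * (xi u (p ^ a)%N)%:~R + t%:~R * (p ^ a)%N%:~R).
    by rewrite -!intrM -intrD bezout mulr1.
  by rewrite !intrM; field.
by rewrite rpredB ?intr_int ?xi_dual_frac.
Qed.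

End NonDivisibleElement.

Lemma dual_order_divisible (L : zmodType) (f : L -> rat) (N p : nat) :
  p_divisible L p -> is_dual f -> (p %| N)%N ->
  (forall x, f x *+ N \is a Num.int) -> forall x, f x *+ (N %/ p) \is a Num.int.
Proof.
move=> pL hf pN fN x; have [y <-] := pL x.
have := rpredD (rpredMn (N %/ p) (dualMz hf y p)) (fN y).
by rewrite -pmulrn; congr in_mem; rewrite -[X in f y *+ X](divnK pN) mulrnA; ring.
Qed.

Section GeneratorDual.
Variables (L : zmodType) (hTF : torsion_free L) (hR1 : rank_one L).
Variables (xi : L -> nat -> int) (hxi : is_hom_zhat xi) (gen : generates_hom xi).

Lemma generates_den_ndvd (t : rat) (p : nat) : prime p -> ~ p_divisible L p ->
  (forall x, xi_dual xi t x \is a Num.int) -> ~~ (p %| `|denq t|)%N.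
Proof.
move=> pp npL t0; have [u hu] := nondivisible_witness npL.
apply: contra (generates_hom_ndvd hTF hR1 pp hu gen) => p_t.
have d0 : (0 < `|denq t|)%N by rewrite absz_gt0 denq_neq0.
rewrite -(is_zhat_dvdE (hxi.1 u) (prime_gt0 pp) d0 p_t).
have := t0 u; rewrite /xi_dual qz_actE Qint_mulz_denqE -absz_denq.
by apply: dvdz_trans; rewrite dvdzE.
Qed.

Lemma generates_inj (r s : rat) : in_muS L r -> in_muS L s ->
  dual_eq (xi_dual xi r) (xi_dual xi s) -> isint (r - s).
Proof.
move=> hr hs rs; have hrs := in_muSD hr (in_muSN hs).
have t0 x : xi_dual xi (r - s) x \is a Num.int.
  have := xi_dualD hxi (r - s) s x; rewrite subrK => rsD.
  have := rs x; rewrite !isintE in rsD * => rsx.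
  by have := rpredB rsx rsD; congr in_mem; ring.
have d0 : (0 < `|denq (r - s)|)%N by rewrite absz_gt0 denq_neq0.
have [d1|d1] := leqP `|denq (r - s)| 1.
  by rewrite /isint -absz_denq; apply/eqP; congr Posz; apply/anti_leq; rewrite d1.
have pp := pdiv_prime d1; have pd := pdiv_dvd `|denq (r - s)|.
have npL : ~ p_divisible L (pdiv `|denq (r - s)|).
  by move=> pL; move: (hrs _ pp pL); rewrite pd.
by move: (generates_den_ndvd pp npL t0); rewrite pd.
Qed.

Lemma dual_imageD (f g h : L -> rat) : (forall x, f x = g x + h x) ->
  dual_image xi g -> dual_image xi h -> dual_image xi f.
Proof.
move=> fgh [r [mr gr]] [s [ms hs]]; exists (r + s); split; first exact: in_muSD.
move=> x; have := xi_dualD hxi r s x; move: (gr x) (hs x).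
rewrite !isintE fgh => gx hx rsx; have := rpredB (rpredD gx hx) rsx.
by congr in_mem; ring.
Qed.

Lemma dual_image_coprime (f : L -> rat) (q n : nat) : coprime q n -> is_dual f ->
  (forall x, f x *+ (q * n) \is a Num.int) ->
  (forall g, is_dual g -> (forall x, g x *+ q \is a Num.int) -> dual_image xi g) ->
  (forall g, is_dual g -> (forall x, g x *+ n \is a Num.int) -> dual_image xi g) ->
  dual_image xi f.
Proof.
move=> qn hf fqn imq imn; have /coprimezP[[al be] /= bezout] : coprimez q n by [].
apply: (@dual_imageD _ (fun x => f x * (be * n)%:~R) (fun x => f x * (al * q)%:~R)).
- by move=> x; rewrite -mulrDr -intrD addrC bezout mulr1.
- apply: imq => [|x]; first exact: is_dualMz.
  by have := rpredMz be (fqn x); congr in_mem; rewrite -mulrzr; ring.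
- apply: imn => [|x]; first exact: is_dualMz.
  by have := rpredMz al (fqn x); congr in_mem; rewrite -mulrzr; ring.
Qed.

Lemma generates_surj (f : L -> rat) (N : nat) : (0 < N)%N -> is_dual f ->
  (forall x, f x *+ N \is a Num.int) -> dual_image xi f.
Proof.
elim/ltn_ind: N f => N IH f N0 hf fN.
have [N1|N1] := leqP N 1.
  exists 0; split; first exact: (@in_muS_int L 0).
  move=> x; rewrite xi_dual0 subr0 isintE.
  by have := fN x; have -> : N = 1%N by apply/anti_leq; rewrite N1.
have pp := pdiv_prime N1; have pN := pdiv_dvd N; set p := pdiv N in pp pN.
have [pL|npL] := classic (p_divisible L p).
  apply: (IH (N %/ p)%N) => //; last exact: dual_order_divisible.
    by rewrite ltn_Pdiv ?prime_gt1.
  by rewrite divn_gt0 ?prime_gt0 // dvdn_leq.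
have [u hu] := nondivisible_witness npL.
have N'N : (N`_p^' < N)%N.
  by rewrite -{2}(partnC p N0) ltn_Pmull ?part_gt0 // p_part_gt1 mem_primes pp N0 pN.
rewrite -(partnC p N0) in fN.
apply: (dual_image_coprime (coprime_partC _ _ _) hf fN) => g hg gN.
  apply: (generates_dual_image_ppow hTF hR1 pp hu (a := logn p N) hxi gen hg).
  by rewrite -p_part.
by apply: (IH _ N'N) => //; rewrite part_gt0.
Qed.

End GeneratorDual.

Theorem proposition8p9 (L : zmodType) (hTF : torsion_free L) (hR1 : rank_one L)
  (xi : L -> nat -> int) (hxi : is_hom_zhat xi) :
  generates_hom xi <-> dual_restr_iso xi.
Proof.
split; last exact: iso_generates.
move=> gen; split.
- by move=> r _; apply: xi_dual_tor.
- by move=> r s _ _; apply: xi_dualD.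
- exact: generates_inj.
- by move=> f [hf [N [N0 fN]]]; apply: generates_surj hf fN.
Qed.
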